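(* Let $T$ be a reflection factorization in $G(4,2,2)$ of length $\ell\ge 4$ containing at least one entry from each of the conjugacy classes $S_1,S_2,S_3$. Let $r$ be a reflection in one of these conjugacy classes that is represented by more than one entry of $T$. If $x$ is a reflection in the same conjugacy class as $r$, then the Hurwitz orbit of $T$ contains a factorization whose right-most entry is $x$ and whose first $\ell-1$ entries generate $G(4,2,2)$.
   Context: $G(4,2,2)$ is the group of the sixteen $2\times 2$ complex monomial matrices whose nonzero entries lie in $\{\pm1,\pm i\}$ and whose two nonzero entries multiply to $\pm 1$. A reflection is a matrix whose fixed space in $\mathbb{C}^2$ has dimension $1$. $G(4,2,2)$ contains six reflections, all of order $2$, which split into three conjugacy classes $S_1,S_2,S_3$ of $G(4,2,2)$, each of size $2$. A reflection factorization of length $\ell$ is a tuple $(r_1,\dots,r_\ell)$ of reflections in $G(4,2,2)$; a set of entries generates the subgroup they generate. The Hurwitz move $\sigma_i$ sends $(r_1,\dots,r_\ell)$ to $(r_1,\dots,r_{i-1},r_{i+1},r_{i+1}^{-1}r_ir_{i+1},r_{i+2},\dots,r_\ell)$; the Hurwitz orbit of $T$ is the set of factorizations obtained from $T$ by finite sequences of Hurwitz moves. *)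

From HB Require Import structures.
From mathcomp Require Import all_boot all_order all_algebra all_field.
Set Implicit Arguments. Unset Strict Implicit. Unset Printing Implicit Defensive.
Import Order.TTheory GRing.Theory Num.Theory.
Local Open Scope ring_scope.

Notation mat := 'M[algC]_2.
Definition i0 : 'I_2 := ord0.
Definition i1 : 'I_2 := ord_max.

Definition unit4 (z : algC) : bool := z \in [:: 1; -1; 'i; - 'i].

Definition pm1 (z : algC) : bool := (z == 1) || (z == -1).

Definition inG422 (A : mat) : bool :=
  [&& A i0 i1 == 0, A i1 i0 == 0, unit4 (A i0 i0), unit4 (A i1 i1)
    & pm1 (A i0 i0 * A i1 i1)]
  || [&& A i0 i0 == 0, A i1 i1 == 0, unit4 (A i0 i1), unit4 (A i1 i0)
    & pm1 (A i0 i1 * A i1 i0)].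

(* dimension of the fixed space {v in C^2 | A v = v} (column vectors),
   computed as the row kernel of (A - 1)^T *)
Definition fixdim (A : mat) : nat := \rank (kermx ((A - 1%:M)^T)).

Definition reflection (A : mat) : Prop := inG422 A /\ fixdim A = 1%N.

Definition conjG (A B : mat) : Prop :=
  exists2 g, inG422 g & B = invmx g *m A *m g.

Inductive gen (S : mat -> Prop) : mat -> Prop :=
| gen_base A : S A -> gen S A
| gen_one : gen S 1%:M
| gen_mul A B : gen S A -> gen S B -> gen S (A *m B)
| gen_inv A : gen S A -> gen S (invmx A).

Definition generates_G422 (s : seq mat) : Prop :=
  forall A, gen (fun B => B \in s) A <-> inG422 A.

(* Hurwitz move sigma_(i+1) (0-based index i, requires i.+1 < size s) *)
Definition hurwitz_move (i : nat) (s : seq mat) : seq mat :=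
  let ri := nth 0 s i in let rj := nth 0 s i.+1 in
  take i s ++ [:: rj; invmx rj *m ri *m rj] ++ drop i.+2 s.

Inductive hurwitz_step (s t : seq mat) : Prop :=
| HStep i : (i.+1 < size s)%N -> t = hurwitz_move i s -> hurwitz_step s t.

Inductive in_hurwitz_orbit (s : seq mat) : seq mat -> Prop :=
| HO_refl : in_hurwitz_orbit s s
| HO_step t u : in_hurwitz_orbit s t -> hurwitz_step t u -> in_hurwitz_orbit s u.

(* Encoding the elements of G(4,2,2) by triples (p, a, b) turns its group law, its
   reflections and their conjugacy classes into finite computations.  Each class
   consists of two reflections, and conjugating by a reflection of another class swaps
   them.  Hurwitz moves push an entry whose class differs from that of x to the right
   end, and then an entry of the class of x behind it; if the last entry is not x
   itself, two more moves replace it by its conjugate under a reflection of another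
   class, which is x.  Hurwitz moves preserve the multiset of classes, and the class of
   x occurs twice in T, so the first l - 1 entries still meet every class; one
   reflection from each class generates G(4,2,2). *)

From HB Require Import structures.
From mathcomp Require Import all_boot all_order all_algebra all_field.
From mathcomp Require Import zify.
Import Order.TTheory GRing.Theory Num.Theory.
Local Open Scope ring_scope.

Set Implicit Arguments.
Unset Strict Implicit.
Unset Printing Implicit Defensive.

Lemma ord2P (i : 'I_2) : i = i0 \/ i = i1.
Proof. by case: i => [[|[|]] lt_i2]; [left | right |] => //; apply: val_inj. Qed.

Lemma mulmx2E (R : pzRingType) (A B : 'M[R]_2) i j :
  (A *m B) i j = A i i0 * B i0 j + A i i1 * B i1 j.
Proof.
by rewrite !mxE !big_ord_recl big_ord0 addr0 (_ : lift ord0 ord0 = i1); last exact: val_inj.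
Qed.

Lemma det_mx22 (R : comPzRingType) (A : 'M[R]_2) :
  \det A = A i0 i0 * A i1 i1 - A i0 i1 * A i1 i0.
Proof.
rewrite (expand_det_row _ i0) !big_ord_recl big_ord0 addr0 /cofactor !det_mx11 !mxE.
rewrite expr0 mul1r expr1 mulN1r mulrN.
rewrite (_ : lift ord0 ord0 = i1); last exact: val_inj.
by rewrite (_ : lift i1 0 = i0); last exact: val_inj.
Qed.

Lemma rank_mx2_eq1 (F : fieldType) (M : 'M[F]_2) :
  (\rank M == 1%N) = (M != 0) && (\det M == 0).
Proof.
rewrite -mxrank_eq0 -[\det M == 0]negbK -unitfE -unitmxE -row_free_unit /row_free.
by have := rank_leq_row M; case: (\rank M) => [|[|[|]]].
Qed.

Lemma fixdim_eq1 (A : mat) : (fixdim A == 1%N) = (A != 1%:M) && (\det (A - 1%:M) == 0).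
Proof.
rewrite /fixdim mxrank_ker mxrank_tr -subr_eq0 -rank_mx2_eq1.
by have := rank_leq_row (A - 1%:M); case: (\rank (A - 1%:M)) => [|[|[|]]].
Qed.

Lemma prim_root_i : 4.-primitive_root ('i : algC).
Proof.
have expi4 : 'i ^+ 4 = 1 :> algC by rewrite -[4%N]/(2 * 2)%N exprM sqrCi sqrrN expr1n.
have N1 : (-1 : algC) != 1 := negbT (lt_eqF (lt_trans (ltrN10 _) ltr01)).
have [m prim_m dvd_m4] := prim_order_exists (ltn0Sn 3) expi4.
have expim := prim_expr_order prim_m.
case: m prim_m dvd_m4 expim => [|[|[|[|[|m]]]]] prim_m dvd_m4 expim.
- by rewrite dvd0n in dvd_m4.
- rewrite expr1 in expim.
  by move: (@sqrCi algC); rewrite expim expr1n => /esym/eqP; rewrite (negbTE N1).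
- by move: (@sqrCi algC); rewrite expim => /eqP; rewrite eq_sym (negbTE N1).
- by [].
- exact: prim_m.
- by have := dvdn_leq (ltn0Sn 3) dvd_m4.
Qed.

Lemma expi_inj (a b : 'I_4) : ('i ^+ a == 'i ^+ b :> algC) = (a == b).
Proof. by rewrite (eq_prim_root_expr prim_root_i) !modn_small. Qed.

Lemma expiD (a b : 'I_4) : 'i ^+ (a + b)%R = 'i ^+ a * 'i ^+ b :> algC.
Proof. by rewrite -exprD -[RHS](prim_expr_mod prim_root_i). Qed.

Lemma expi_neq0 n : ('i ^+ n : algC) != 0.
Proof. by rewrite expf_neq0 // neq0Ci. Qed.

Definition code := (bool * 'I_4 * 'I_4)%type.

(* [(p, a, b)] is diag(i^a, i^b), followed by the swap of coordinates when [p] holds;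
   these are the 32 elements of G(4,1,2), and [even_code] cuts out G(4,2,2). *)
Definition code_mx (c : code) : mat :=
  let: (p, a, b) := c in
  \matrix_(i, j) if (i == j) (+) p then 'i ^+ (if i == i0 then a else b) else 0.

Definition code1 : code := (false, 0, 0)%R.

Definition code_mul (c d : code) : code :=
  let: (p, a0, a1) := c in let: (q, b0, b1) := d in
  (p (+) q, a0 + (if p then b1 else b0), a1 + (if p then b0 else b1))%R.

Definition code_inv (c : code) : code :=
  let: (p, a0, a1) := c in if p then (true, - a1, - a0)%R else (false, - a0, - a1)%R.

Definition code_conj (g a : code) : code := code_mul (code_mul (code_inv g) a) g.

Definition even_code (c : code) : bool := let: (_, a, b) := c in ~~ odd (a + b)%N.

Definition eigen1_code (c : code) : bool :=
  let: (p, a, b) := c in if p then (a + b == 0)%R else (a == 0) || (b == 0).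

Definition refl_code (c : code) : bool := [&& even_code c, c != code1 & eigen1_code c].

(* Class 0 is the diagonal reflections, class 1 is +-[[0,1],[1,0]] and class 2 is
   +-[[0,i],[-i,0]]; the value on non-reflections is irrelevant. *)
Definition refl_class (c : code) : 'I_3 :=
  let: (p, a, _) := c in if p then (if odd a then 2 else 1)%R else 0%R.

(* Spelled out with [inZp] rather than [enum], which does not reduce under [vm_compute]. *)
Definition codes : seq code :=
  let ords4 : seq 'I_4 := [seq inZp k | k <- iota 0 4] in
  [seq (pa, b) | pa <- [seq (p, a) | p <- [:: false; true], a <- ords4], b <- ords4].

Lemma mem_codes c : c \in codes.
Proof.
have ords4P (a : 'I_4) : a \in [seq inZp k | k <- iota 0 4].
  apply/mapP; exists (val a); first by rewrite mem_iota ltn_ord.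
  by apply: val_inj; rewrite /= modn_small.
by case: c => [[p a] b]; rewrite (allpairs_f pair) ?(allpairs_f pair) //; case: p.
Qed.

Lemma codesP (P : pred code) : reflect (forall c, P c) (all P codes).
Proof. by apply: (iffP allP) => P_codes c => [|_]; apply: P_codes; rewrite mem_codes. Qed.

Ltac decide_on_codes :=
  intros; try apply/eqP;
  repeat match goal with
  | H : is_true _ |- _ => move: H; apply/implyP
  | H : _ = _ |- _ => move/eqP: H; apply/implyP
  end;
  repeat match goal with c : code |- _ => move: c; apply/codesP end;
  by vm_compute.

Lemma code_mulV c : code_mul c (code_inv c) = code1.
Proof. decide_on_codes. Qed.

Lemma even_code_mul c d : even_code c -> even_code d -> even_code (code_mul c d).
Proof. decide_on_codes. Qed.

Lemma even_code_inv c : even_code c -> even_code (code_inv c).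
Proof. decide_on_codes. Qed.

Lemma refl_code_conj g a : even_code g -> refl_code a -> refl_code (code_conj g a).
Proof. decide_on_codes. Qed.

Lemma refl_class_conj g a : even_code g -> refl_code a -> refl_class (code_conj g a) = refl_class a.
Proof. decide_on_codes. Qed.

Lemma code_conj_other_class e a x :
    refl_code e -> refl_code a -> refl_code x -> refl_class e != refl_class a ->
  refl_class x = refl_class a -> x != a -> code_conj e a = x.
Proof. decide_on_codes. Qed.

Lemma code_mxM c d : code_mx (code_mul c d) = code_mx c *m code_mx d.
Proof.
case: c d => [[p a0] a1] [[q b0] b1]; apply/matrixP => i j; rewrite mulmx2E !mxE.
by case: p q (ord2P i) (ord2P j) => [] [] [->|->] [->|->] /=;
  rewrite ?mul0r ?mulr0 ?add0r ?addr0 ?expiD.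
Qed.

Lemma code_mx1 : code_mx code1 = 1%:M.
Proof.
by apply/matrixP => i j; rewrite !mxE; case: (ord2P i) (ord2P j) => [] -> [] ->.
Qed.

Lemma code_mxV c : invmx (code_mx c) = code_mx (code_inv c).
Proof.
have mulV : code_mx c *m code_mx (code_inv c) = 1%:M by rewrite -code_mxM code_mulV code_mx1.
by rewrite -[LHS]mulmx1 -mulV mulKmx //; case: (mulmx1_unit mulV).
Qed.

Lemma code_mx_conj g a : invmx (code_mx g) *m code_mx a *m code_mx g = code_mx (code_conj g a).
Proof. by rewrite /code_conj !code_mxM code_mxV. Qed.

Lemma code_mx_inj : injective code_mx.
Proof.
move=> [[p a0] a1] [[q b0] b1] /matrixP eq_mx.
have := eq_mx i0 i0; have := eq_mx i1 i1; have := eq_mx i0 i1; have := eq_mx i1 i0.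
rewrite !mxE /= {eq_mx}; case: p q => [] [] /=.
- by move=> /eqP + /eqP; rewrite !expi_inj => /eqP -> /eqP ->.
- by move=> /eqP; rewrite (negbTE (expi_neq0 _)).
- by move=> _ _ /eqP; rewrite (negbTE (expi_neq0 _)).
- by move=> _ _ /eqP + /eqP; rewrite !expi_inj => /eqP -> /eqP ->.
Qed.

Lemma unit4E z : unit4 z = (z \in [:: 'i ^+ 0; 'i ^+ 2; 'i ^+ 1; 'i ^+ 3]).
Proof. by rewrite expr0 sqrCi expr1 exprSr sqrCi mulN1r. Qed.

Lemma unit4_expi (a : 'I_4) : unit4 ('i ^+ a).
Proof. by rewrite unit4E; case: a => [[|[|[|[|a]]]] ?] //=; rewrite !inE eqxx ?orbT. Qed.

Lemma unit4P z : unit4 z -> exists a : 'I_4, z = 'i ^+ a.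
Proof. by rewrite unit4E !inE => /or4P[] /eqP ->; [exists 0 | exists 2 | exists 1 | exists 3]. Qed.

Lemma pm1_expi (a b : 'I_4) : pm1 ('i ^+ a * 'i ^+ b) = ~~ odd (a + b).
Proof.
rewrite /pm1 -exprD -sqrCi -(expr0 'i) !(eq_prim_root_expr prim_root_i).
by case: a => [[|[|[|[|a]]]] ?]; case: b => [[|[|[|[|b]]]] ?].
Qed.

Lemma inG422_code A : inG422 A <-> exists2 c, even_code c & A = code_mx c.
Proof.
split=> [|[[[p a] b] /= even_ab ->]]; last first.
  by rewrite /inG422 !mxE /=; case: p; rewrite /= ?unit4_expi ?pm1_expi !eqxx even_ab /= ?orbT.
case/orP=> /and5P[/eqP Z1 /eqP Z2 /unit4P[a Ea] /unit4P[b Eb]];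
  rewrite Ea Eb pm1_expi => even_ab; [exists (false, a, b) | exists (true, a, b)] => //;
  by apply/matrixP => i j; rewrite !mxE; case: (ord2P i) (ord2P j) => [] -> [] -> /=.
Qed.

Lemma det_code_mx_sub1 c : (\det (code_mx c - 1%:M) == 0) = eigen1_code c.
Proof.
have expi_eq1 (a : 'I_4) : ('i ^+ a == 1 :> algC) = (a == 0%R).
  by rewrite -(expr0 'i) (eq_prim_root_expr prim_root_i) mod0n modn_small.
case: c => [[[] a] b]; rewrite det_mx22 !mxE /= ?mulr0n ?mulr1n !subr0 ?sub0r.
- by rewrite mulrNN mulr1 subr_eq0 eq_sym -expiD expi_eq1.
- by rewrite mul0r subr0 mulf_eq0 !subr_eq0 !expi_eq1.
Qed.

Lemma refl_code_even c : refl_code c -> even_code c.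
Proof. by case/and3P. Qed.

Lemma reflection_code c : reflection (code_mx c) <-> refl_code c.
Proof.
have fixdim_c : (fixdim (code_mx c) == 1%N) = (c != code1) && eigen1_code c.
  by rewrite fixdim_eq1 det_code_mx_sub1 -code_mx1 (inj_eq code_mx_inj).
rewrite /reflection /refl_code -fixdim_c; split.
- by case=> /inG422_code[c' even_c' /code_mx_inj ->] ->; rewrite even_c'.
- by case/andP=> even_c /eqP fix1; split=> //; apply/inG422_code; exists c.
Qed.

Lemma reflectionP A : reflection A -> exists2 c, refl_code c & A = code_mx c.
Proof.
move=> reflA; have [/inG422_code[c _ defA] _] := reflA.
by exists c => //; apply/reflection_code; rewrite -defA.
Qed.

Lemma conjG_class a b : refl_code a -> conjG (code_mx a) (code_mx b) -> refl_class b = refl_class a.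
Proof.
move=> refl_a [_ /inG422_code[g even_g ->]]; rewrite code_mx_conj => /code_mx_inj ->.
exact: refl_class_conj.
Qed.

Lemma gen_inG422 (S : seq code) A :
  all even_code S -> gen [in map code_mx S] A -> inG422 A.
Proof.
move=> even_S; elim=> {A} [A /mapP[c S_c ->] | |
    A B _ /inG422_code[a even_a ->] _ /inG422_code[b even_b ->] | A _ /inG422_code[a even_a ->]];
  apply/inG422_code.
- by exists c => //; apply: (allP even_S).
- by exists code1; rewrite ?code_mx1.
- by exists (code_mul a b); rewrite ?code_mxM ?even_code_mul.
- by exists (code_inv a); rewrite ?code_mxV ?even_code_inv.
Qed.

Definition words_step (S W : seq code) : seq code :=
  undup (W ++ [seq code_mul w g | w <- W, g <- S]).

(* The products of at most [n.+1] elements of [S]. *)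
Definition words (n : nat) (S : seq code) : seq code := iter n (words_step S) S.

Lemma gen_words (X : mat -> Prop) (S : seq code) n w :
  (forall g, g \in S -> gen X (code_mx g)) -> w \in words n S -> gen X (code_mx w).
Proof.
move=> gen_S; elim: n w => [|n IHn] w /=; first exact: gen_S.
rewrite mem_undup mem_cat => /orP[/IHn // | /allpairsP[[u g] [/= W_u S_g ->]]].
by rewrite code_mxM; apply: gen_mul; [apply: IHn | apply: gen_S].
Qed.

Definition class_refls (k : 'I_3) : seq code :=
  [seq c <- codes | refl_code c & refl_class c == k].

(* One reflection from each class generates G(4,2,2): every even code is a product
   of at most seven of them. *)
Lemma words_class_reps :
  all (fun a => all (fun b => all (fun c =>
    all (fun v => v \in words 6 [:: a; b; c]) [seq v <- codes | even_code v])
    (class_refls 2)) (class_refls 1)) (class_refls 0).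
Proof. by vm_compute. Qed.

Lemma generates_refl_codes (S : seq code) :
  all refl_code S -> (forall k, k \in map refl_class S) -> generates_G422 (map code_mx S).
Proof.
move=> refl_S classes_S A; split.
  by apply: gen_inG422; apply/allP => c /(allP refl_S)/refl_code_even.
case/inG422_code=> v even_v ->.
have class_rep k : exists2 c, c \in S & c \in class_refls k.
  have /mapP[c S_c ->] := classes_S k.
  by exists c; rewrite // mem_filter (allP refl_S) ?eqxx ?mem_codes.
have [a S_a rep_a] := class_rep 0%R; have [b S_b rep_b] := class_rep 1%R.
have [c S_c rep_c] := class_rep 2%R.
apply: (@gen_words _ [:: a; b; c] 6).
  by move=> g; rewrite !inE => /or3P[] /eqP ->; apply: gen_base; apply: map_f.
move: words_class_reps => /allP/(_ a rep_a)/allP/(_ b rep_b)/allP/(_ c rep_c)/allP.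
by apply; rewrite mem_filter even_v mem_codes.
Qed.

Lemma hurwitz_step_cat (u w : seq mat) A B :
  hurwitz_step (u ++ A :: B :: w) (u ++ B :: invmx B *m A *m B :: w).
Proof.
apply: (HStep (i := size u)); first by rewrite size_cat /=; lia.
rewrite /hurwitz_move take_size_cat // !nth_cat ltnn ltnNge leqnSn /= subnn subSnn /=.
by rewrite drop_cat ltnNge leqW //= -[(size u).+2]addn2 addKn /= drop0.
Qed.

Definition hurwitz_reach (s t : seq code) : Prop :=
  [/\ in_hurwitz_orbit (map code_mx s) (map code_mx t), all refl_code t
    & perm_eq (map refl_class t) (map refl_class s)].

Lemma hurwitz_reach_refl s : all refl_code s -> hurwitz_reach s s.
Proof. by split=> //; apply: HO_refl. Qed.

Lemma hurwitz_reach_move s u c b w :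
  hurwitz_reach s (u ++ c :: b :: w) -> hurwitz_reach s (u ++ b :: code_conj b c :: w).
Proof.
case=> orbit_t; rewrite all_cat /= => /and4P[refl_u refl_c refl_b refl_w] classes_t.
have even_b := refl_code_even refl_b.
split.
- apply: HO_step orbit_t _; rewrite !map_cat /= -code_mx_conj; exact: hurwitz_step_cat.
- by rewrite all_cat /= refl_u refl_b refl_code_conj.
- apply: perm_trans classes_t; rewrite !map_cat /= refl_class_conj // perm_cat2l.
  by apply/permP => P /=; rewrite addnCA.
Qed.

Lemma hurwitz_reach_to_end s u c w : hurwitz_reach s (u ++ c :: w) ->
  exists2 c', hurwitz_reach s (rcons (u ++ w) c') & refl_class c' = refl_class c.
Proof.
elim: w u c => [|b w IHw] u c reach_t; first by exists c => //; rewrite cats0 -cats1.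
have [_ refl_t _] := reach_t.
have [refl_c refl_b] : refl_code c /\ refl_code b.
  by move: refl_t; rewrite all_cat /= => /and3P[_ -> /andP[-> _]].
have := hurwitz_reach_move reach_t; rewrite -cat_rcons => /IHw[c' reach_t' class_c'].
exists c'; first by rewrite -cat_rcons.
by rewrite class_c' (refl_class_conj (refl_code_even refl_b) refl_c).
Qed.

Lemma hurwitz_reach_fix_last s p d c x :
  hurwitz_reach s (p ++ [:: d; c]) -> refl_class d != refl_class c ->
  refl_code x -> refl_class x = refl_class c -> exists q, hurwitz_reach s (rcons q x).
Proof.
move=> reach_t class_dc refl_x class_x; have [_ refl_t _] := reach_t.
have [refl_d refl_c] : refl_code d /\ refl_code c.
  by move: refl_t; rewrite all_cat /= => /and3P[_ -> /andP[-> _]].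
have [<- | neq_cx] := eqVneq c x; first by exists (rcons p d); rewrite -cats1 cat_rcons.
(* (d, c) -> (c, d^c) -> (d^c, c^(d^c)), and d^c is a reflection of the class of d. *)
have := hurwitz_reach_move (hurwitz_reach_move (w := [::]) reach_t).
have refl_e := refl_code_conj (refl_code_even refl_c) refl_d.
have class_e := refl_class_conj (refl_code_even refl_c) refl_d.
have -> : code_conj (code_conj c d) c = x.
  by apply: code_conj_other_class; rewrite ?class_e // eq_sym.
by exists (rcons p (code_conj c d)); rewrite -cats1 cat_rcons.
Qed.

Lemma hurwitz_reach_last s x d c :
  all refl_code s -> refl_code x -> d \in s -> refl_class d != refl_class x ->
  c \in s -> refl_class c = refl_class x -> exists p, hurwitz_reach s (rcons p x).
Proof.
move=> /hurwitz_reach_refl + refl_x s_d class_d + class_c.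
case/splitPr: s_d => u w /hurwitz_reach_to_end[d' + class_d'] s_c.
have /splitPr[u' w'] : c \in u ++ w.
  have neq_cd : c != d by apply: contraNneq class_d => <-; rewrite class_c.
  by move: s_c; rewrite !mem_cat inE (negbTE neq_cd).
rewrite -cats1 -catA => /hurwitz_reach_to_end[c' reach_c' class_c'].
apply: (hurwitz_reach_fix_last (p := u' ++ w') (d := d') (c := c') _ _ refl_x).
- by move: reach_c'; rewrite -cats1 -!catA.
- by rewrite class_c' class_d' class_c.
- by rewrite class_c' class_c.
Qed.

Lemma mem_perm_rcons (T : eqType) (p s : seq T) x y :
  perm_eq (rcons p x) s -> ((x == y) < count_mem y s)%N -> y \in p.
Proof.
move=> /permP/(_ (pred1 y)) <-; rewrite -cats1 count_cat /= addn0 eq_sym.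
by rewrite -has_pred1 has_count; case: (y == x); lia.
Qed.

Lemma count_nth2 (T : Type) (x0 : T) (P : pred T) (s : seq T) i j :
  (i < j < size s)%N -> P (nth x0 s i) -> P (nth x0 s j) -> (1 < count P s)%N.
Proof.
case/andP=> lt_ij lt_js Pi Pj.
have: has P (take j s).
  by apply/(has_nthP x0); exists i; rewrite ?size_take ?lt_js ?nth_take.
rewrite -[s in count _ s](cat_take_drop j s) count_cat (drop_nth x0 lt_js) /= Pj has_count /=; lia.
Qed.

Lemma hurwitz_last_generating s x :
    all refl_code s -> refl_code x -> (forall k, k \in map refl_class s) ->
    (1 < count_mem (refl_class x) (map refl_class s))%N ->
  exists p, [/\ in_hurwitz_orbit (map code_mx s) (map code_mx (rcons p x)),
    size p = (size s).-1 & generates_G422 (map code_mx p)].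
Proof.
move=> refl_s refl_x classes_s twice_x.
have [k neq_kx] : exists k : 'I_3, k != refl_class x.
  exists (if refl_class x == 0%R then 1%R else 0%R).
  by case: (eqVneq (refl_class x) 0%R) => [-> | ]; rewrite // eq_sym.
have [d s_d class_d] := mapP (classes_s k).
have [c s_c class_c] := mapP (classes_s (refl_class x)).
have neq_dx : refl_class d != refl_class x by rewrite -class_d.
have [p [orbit_p]] := hurwitz_reach_last refl_s refl_x s_d neq_dx s_c (esym class_c).
rewrite all_rcons => /andP[_ refl_p] classes_p.
exists p; split=> //.
  by have := perm_size classes_p; rewrite !size_map size_rcons => <-.
apply: generates_refl_codes => // k'.
apply: (@mem_perm_rcons _ _ (map refl_class s) (refl_class x)); first by rewrite -map_rcons.
by case: (eqVneq (refl_class x) k') => [<- // | _]; rewrite /= -has_count has_pred1.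
Qed.

Lemma reflection_seqP (T : seq mat) :
  (forall A, A \in T -> reflection A) -> exists2 s, all refl_code s & T = map code_mx s.
Proof.
elim: T => [|A T IHT] reflT; first by exists [::].
have [a refl_a ->] := reflectionP (reflT A (mem_head A T)).
have [s refl_s ->] : exists2 s, all refl_code s & T = map code_mx s.
  by apply: IHT => B T_B; apply: reflT; rewrite inE T_B orbT.
by exists (a :: s); rewrite /= ?refl_a.
Qed.

Lemma refl_class_surj k : exists2 a, refl_code a & refl_class a = k.
Proof.
have: has (fun a => refl_code a && (refl_class a == k)) codes.
  by case: k => [[|[|[|k]]] ?] //; vm_compute.
by case/hasP=> a _ /andP[refl_a /eqP class_a]; exists a.
Qed.

Lemma conjG_classes_covered s : all refl_code s ->
    (forall A, reflection A -> exists2 B, B \in map code_mx s & conjG B A) ->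
  forall k, k \in map refl_class s.
Proof.
move=> refl_s cover k; have [a /reflection_code refl_a <-] := refl_class_surj k.
have [_ /mapP[b s_b ->] conj_ba] := cover _ refl_a.
by rewrite (conjG_class (allP refl_s b s_b) conj_ba) map_f.
Qed.

Lemma conjG_nth_class s r i : all refl_code s -> (i < size s)%N ->
  conjG (nth 0 (map code_mx s) i) (code_mx r) -> refl_class r = refl_class (nth code1 s i).
Proof.
move=> refl_s lt_is; rewrite (nth_map code1) //; apply: conjG_class.
exact: (allP refl_s) (mem_nth code1 lt_is).
Qed.

Theorem proposition3p9 (T : seq 'M[algC]_2) (r x : 'M[algC]_2) :
  (4 <= size T)%N ->
  (forall A, A \in T -> reflection A) ->
  (* T has an entry from each conjugacy class of reflections *)
  (forall s, reflection s -> exists2 A, A \in T & conjG A s) ->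
  reflection r ->
  (* the conjugacy class of r is represented by more than one entry of T *)
  (exists i j : nat, [/\ (i < j)%N, (j < size T)%N,
      conjG (nth 0 T i) r & conjG (nth 0 T j) r]) ->
  reflection x -> conjG r x ->
  exists2 T', in_hurwitz_orbit T T' &
    last 0 T' = x /\ generates_G422 (take (size T).-1 T').
Proof.
(* [4 <= size T] is implied by the two hypotheses on conjugacy classes. *)
move=> _ /reflection_seqP[s refl_s ->] coverT /reflectionP[rc refl_rc ->].
rewrite size_map => -[i [j [lt_ij lt_js conj_i conj_j]]] /reflectionP[xc refl_xc ->] conj_rx.
have twice_x : (1 < count_mem (refl_class xc) (map refl_class s))%N.
  rewrite count_map (conjG_class refl_rc conj_rx).
  apply: (@count_nth2 _ code1 _ s i j); rewrite ?lt_ij //=; apply/eqP/esym.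
    exact: conjG_nth_class refl_s (ltn_trans lt_ij lt_js) conj_i.
  exact: conjG_nth_class refl_s lt_js conj_j.
have [p [orbit_p size_p gen_p]] :=
  hurwitz_last_generating refl_s refl_xc (conjG_classes_covered refl_s coverT) twice_x.
exists (map code_mx (rcons p xc)) => //.
by rewrite map_rcons last_rcons -cats1 -size_p take_size_cat ?size_map.
Qed.
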